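(* Let $k\ge 10$, and consider the procedure $\mathcal{A}$ (described in the context) started on an input $(\mathcal{L},\ell,\tau)$ with $\mathrm{rank}(\mathcal{L})=n\ge k$, $\tau\ge 0$ and $1\le\ell\le n-k+1$. Then every invocation $\mathcal{A}(\mathcal{L}_0,\ell_0,\tau_0)$ occurring in the recursion, with $n_0:=\mathrm{rank}(\mathcal{L}_0)$, satisfies $n_0\ge k$, $1\le\ell_0<n_0$, and \[ \min\{\ell_0,\;n_0-\ell_0\}\le n_0-k+1 . \] In particular, every invocation with $n_0=k$ has $\ell_0\in\{1,k-1\}$.
   Context: Notation: for a lattice $\mathcal{L}$, $\mathcal{L}^*$ is its dual lattice, and for a lattice $\mathcal{M}$, $\mathcal{M}^\perp$ is the orthogonal complement of $\mathrm{span}(\mathcal{M})$; for a rank-$r$ sublattice $\mathcal{M}\subseteq \mathcal{L}^*$, $\mathcal{L}\cap\mathcal{M}^\perp$ has rank $\mathrm{rank}(\mathcal{L})-r$. Sublattices returned by $\mathcal{A}(\mathcal{L},\ell,\tau)$ have rank $\ell$. Procedure $\mathcal{A}(\mathcal{L},\ell,\tau)$, with $n:=\mathrm{rank}(\mathcal{L})$ and $n>\ell\ge1$, $\tau\ge 0$ integers: 1. Duality step: if $\max\{1,(n-k)/5\}<\ell<n/2$ or $\ell\ge n-\max\{1,(n-k)/10\}$, output $\mathcal{L}\cap\mathcal{A}(\mathcal{L}^*,n-\ell,\tau)^\perp$. 2. Base cases: (a) if $n=k$ and $\ell=1$, call an HSVP oracle on $\mathcal{L}$ and output the lattice generated by the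 returned vector; (b) if $\tau=0$, output the lattice generated by the first $\ell$ vectors of an LLL-reduced basis of $\mathcal{L}$. 3. Recursive step: otherwise set $\ell^*=\lceil (n-k)/20\rceil$, $b=1$ if $\ell<n/2$ and $b=0$ otherwise, compute $\mathcal{M}:=\mathcal{A}(\mathcal{L}^*,\ell^*,\tau-b)$ and output $\mathcal{A}(\mathcal{L}\cap\mathcal{M}^\perp,\ell,\tau)$. The sequence of parameters $(n,\ell,\tau)$ of the invocations depends only on the initial parameters. *)

(* We model the procedure A only through its parameters
   (n, l, tau) = (rank of the input lattice, requested rank, tau), which
   (as stated in the paper) determine the whole recursion tree. *)
From mathcomp Require Import all_boot all_order all_algebra.
Set Implicit Arguments. Unset Strict Implicit. Unset Printing Implicit Defensive.
Import Order.TTheory GRing.Theory Num.Theory.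
Local Open Scope ring_scope.

(* the (real-valued) comparisons of the paper are carried out in rat *)
Definition Q (z : int) : rat := z%:~R.

Definition dual_cond (k n l : int) : bool :=
  ((Num.max 1 ((Q n - Q k) / 5%:R) < Q l) && (Q l < Q n / 2%:R))
  || (Q n - Num.max 1 ((Q n - Q k) / 10%:R) <= Q l).

Definition base_a (k n l : int) : bool := (n == k) && (l == 1).

Definition lstar (k n : int) : int := Num.ceil ((Q n - Q k) / 20%:R).

Definition bbit (n l : int) : int := if Q l < Q n / 2%:R then 1 else 0.

(* invoked k n l t n0 l0 t0 : the call A(L0,l0,t0) with rank(L0) = n0 occurs
   in the recursion started by A(L,l,t) with rank(L) = n (the root call
   itself included). *)
Inductive invoked (k n l t : int) : int -> int -> int -> Prop :=
| inv_root : invoked k n l t n l t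
| inv_dual n0 l0 t0 :
    invoked k n l t n0 l0 t0 -> dual_cond k n0 l0 ->
    invoked k n l t n0 (n0 - l0) t0          (* A(L0^*, n0 - l0, t0) *)
| inv_rec_dual n0 l0 t0 :
    invoked k n l t n0 l0 t0 -> ~~ dual_cond k n0 l0 ->
    ~~ base_a k n0 l0 -> t0 != 0 ->
    invoked k n l t n0 (lstar k n0) (t0 - bbit n0 l0)   (* M := A(L0^*, l^*, t0-b) *)
| inv_rec_main n0 l0 t0 :
    invoked k n l t n0 l0 t0 -> ~~ dual_cond k n0 l0 ->
    ~~ base_a k n0 l0 -> t0 != 0 ->
    invoked k n l t (n0 - lstar k n0) l0 t0.      (* A(L0 cap M^perp, l0, t0) *)

(* Every call satisfies the invariant  k <= n0, 1 <= l0 < n0  and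
   (l0 <= n0 - k + 1 or n0 - l0 <= n0 - k + 1).  The duality step swaps l0
   and n0 - l0.  A recursive step is only reached when the duality condition
   fails, i.e. l0 is neither in the window (max(1, (n0-k)/5), n0/2) nor within
   max(1, (n0-k)/10) of n0; together with the invariant and the failure of
   base case (a) this forces n0 > k, and since l* = ceil((n0-k)/20) is small
   compared with n0 - k, both the call with l* and the call on the sublattice
   of rank n0 - l* again satisfy the invariant. *)
From mathcomp Require Import all_boot all_order all_algebra.
From mathcomp Require Import zify lra.
Import Order.TTheory GRing.Theory Num.Theory.
Local Open Scope ring_scope.

Lemma dual_cond_window (k n l : int) :
  1 < l -> n - k < 5 * l -> 2 * l < n -> dual_cond k n l.
Proof.
rewrite -!(ltr_int rat) !intrM intrB => l_gt1 nk_lt l_lt.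
apply/orP; left; rewrite /Q gt_max -andbA; apply/and3P; split; lra.
Qed.

Lemma dual_cond_top (k n l : int) :
  n - l <= 1 \/ 10 * (n - l) <= n - k -> dual_cond k n l.
Proof.
rewrite -!(ler_int rat) !intrM !intrB => nl_small.
apply/orP; right; rewrite /Q; set M := Num.max _ _.
have [M_ge1 M_ge] : 1 <= M /\ (n%:~R - k%:~R) / 10%:R <= M.
  by rewrite !le_max !lexx orbT.
by case: nl_small; lra.
Qed.

Lemma lstar_bounds (k n : int) :
  20 * (lstar k n - 1) < n - k <= 20 * lstar k n.
Proof.
have /andP[lo hi] := ceil_itv ((Q n - Q k) / 20%:R).
by rewrite -(ltr_int rat) -(ler_int rat) !intrM !intrB; apply/andP; split;
  move: lo hi; rewrite /lstar /Q ?intrB; lra.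
Qed.

Definition call_inv (k n0 l0 : int) : Prop :=
  [/\ k <= n0, 1 <= l0, l0 < n0 & l0 <= n0 - k + 1 \/ k - 1 <= l0].

Lemma call_inv_dual (k n0 l0 : int) :
  call_inv k n0 l0 -> call_inv k n0 (n0 - l0).
Proof. by case=> *; split; lia. Qed.

Section RecursiveStep.

Variables k n0 l0 : int.
Hypothesis inv : call_inv k n0 l0.
Hypothesis not_dual : ~~ dual_cond k n0 l0.
Hypothesis not_base : ~~ base_a k n0 l0.

Let window_fails : [\/ l0 <= 1, 5 * l0 <= n0 - k | n0 <= 2 * l0].
Proof.
have [|l0_gt1] := leP l0 1; first by constructor 1.
have [|nk_lt] := leP (5 * l0) (n0 - k); first by constructor 2.
have [|n0_lt] := leP n0 (2 * l0); first by constructor 3.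
by move: not_dual; rewrite dual_cond_window.
Qed.

Let top_fails : 1 < n0 - l0 /\ n0 - k < 10 * (n0 - l0).
Proof.
by split; rewrite ltNge; apply/negP => ?; move/negP: not_dual; apply;
  apply: dual_cond_top; [left | right].
Qed.

Lemma rec_rank_gt : k < n0.
Proof.
case: inv top_fails => ? ? ? ? [? ?].
suff : n0 != k by move/eqP; lia.
apply/eqP => nk; move/negP: not_base; apply.
by rewrite /base_a nk eqxx /=; apply/eqP; lia.
Qed.

Lemma call_inv_rec_dual : call_inv k n0 (lstar k n0).
Proof.
by have := rec_rank_gt; have /andP[? ?] := lstar_bounds k n0; case: inv; split; lia.
Qed.

Lemma call_inv_rec_main : call_inv k (n0 - lstar k n0) l0.
Proof.
have := rec_rank_gt; have /andP[? ?] := lstar_bounds k n0.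
by case: inv top_fails window_fails => ? ? ? ? [? ?] [?|?|?]; split; lia.
Qed.

End RecursiveStep.

Lemma invoked_call_inv (k n l t n0 l0 t0 : int) :
  call_inv k n l -> invoked k n l t n0 l0 t0 -> call_inv k n0 l0.
Proof.
move=> root; elim=> // [n1 l1 _ _ /call_inv_dual // | n1 l1 _ _ inv1 ? ? _ |
  n1 l1 _ _ inv1 ? ? _].
- exact: call_inv_rec_dual inv1 _ _.
- exact: call_inv_rec_main inv1 _ _.
Qed.

Theorem mainTheorem2 (k n l t : int) :
  10 <= k -> k <= n -> 0 <= t -> 1 <= l -> l <= n - k + 1 ->
  forall n0 l0 t0 : int, invoked k n l t n0 l0 t0 ->
    [/\ k <= n0, 1 <= l0, l0 < n0,
        Num.min l0 (n0 - l0) <= n0 - k + 1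
      & (n0 = k -> l0 = 1 \/ l0 = k - 1)].
Proof.
move=> k_ge10 kn _ l_ge1 l_le n0 l0 t0 /invoked_call_inv.
have root : call_inv k n l by split; lia.
case/(_ root) => kn0 l0_ge1 l0_lt small_side.
split=> // [| n0k]; last by subst n0; lia.
by case: small_side => ?; lia.
Qed.
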